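(* For every $k,s\in\mathbb{N}$, $$\mathbf{E}\bigl|V_G^s(k)\setminus V_X^s(k)\bigr|\le 4\,s\,k^2/(n-1).$$
   Context: Let $V=\{1,\dots,n\}$, $T_1,T_2,\dots$ i.i.d. uniformly random transpositions of $V$, and $\pi_s=T_s\circ\cdots\circ T_1$. Let $G^s$ be the graph on $V$ whose edges are the pairs $\{u,v\}$ such that $(u,v)$ appears among $T_1,\dots,T_s$. $V_G^s(k)\subset V$ denotes the union of the connected components of $G^s$ with at least $k$ vertices, and $V_X^s(k)\subset V$ denotes the union of the cycles of $\pi_s$ with at least $k$ elements. *)

From HB Require Import structures.
From mathcomp Require Import all_boot all_order all_algebra all_fingroup.
Set Implicit Arguments. Unset Strict Implicit. Unset Printing Implicit Defensive.
Import GRing.Theory Num.Theory.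

Definition transpositions (n : nat) : {set {perm 'I_n}} :=
  [set p : {perm 'I_n} | [exists x, exists y, (x != y) && (p == tperm x y)]].

(* pi_s = T_s o ... o T_1 ; in mathcomp (p * q) x = q (p x). *)
Definition pi_s (n s : nat) (T : {ffun 'I_s -> {perm 'I_n}}) : {perm 'I_n} :=
  (\prod_(i < s) T i)%g.

Definition Gedge (n s : nat) (T : {ffun 'I_s -> {perm 'I_n}}) : rel 'I_n :=
  fun u v => (u != v) && [exists i : 'I_s, T i == tperm u v].

Definition Gcomp (n s : nat) (T : {ffun 'I_s -> {perm 'I_n}}) (u : 'I_n) : {set 'I_n} :=
  [set v | connect (Gedge T) u v].

Definition VG (n s k : nat) (T : {ffun 'I_s -> {perm 'I_n}}) : {set 'I_n} :=
  [set u | k <= #|Gcomp T u|].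

Definition VX (n s k : nat) (T : {ffun 'I_s -> {perm 'I_n}}) : {set 'I_n} :=
  [set u | k <= #|porbit (pi_s T) u|].

(* Expectation of |V_G^s(k) \ V_X^s(k)| when T_1..T_s are i.i.d. uniform
   transpositions: average over all s-tuples of transpositions. *)
Definition expected_diff (n s k : nat) : rat :=
  ((\sum_(T : {ffun 'I_s -> {perm 'I_n}} | [forall i, T i \in transpositions n])
      (#|VG k T :\: VX k T|)%:R) / (#|transpositions n| ^ s)%:R)%R.

(* Every cycle of
   pi_t lies inside a connected component of G^t; call a cycle deficient if it
   has fewer than k elements but is not a whole component.  Right multiplication
   by a transposition (a b) either merges the cycles of a and b, and two cycles
   that were whole components merge into a whole component of the new graph, or
   splits the common cycle of a and b, cutting off the arcs from a to b and from
   b to a.  Marking a (resp. b) when the arc from a to b (resp. b to a) has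
   fewer than k steps, every deficient cycle of pi_s contains a marked point, so
   |V_G^s(k) \ V_X^s(k)| <= (k - 1) #marked.  Given pi_(t-1) and a point x, at
   most k - 1 transpositions mark x at step t, namely the (x, pi_(t-1)^j x) with
   0 < j < k; hence a step marks at most n (k - 1) / (n (n - 1) / 2) points on
   average, and E|V_G^s(k) \ V_X^s(k)| <= 2 s (k - 1)^2 / (n - 1). *)

From HB Require Import structures.
From mathcomp Require Import all_boot all_order all_algebra all_fingroup.
From mathcomp Require Import zify.
Set Implicit Arguments. Unset Strict Implicit. Unset Printing Implicit Defensive.
Import GRing.Theory Num.Theory.

Lemma iter_modn (T : Type) (f : T -> T) x j i :
  iter j f x = x -> iter i f x = iter (i %% j) f x.
Proof.
by move=> fjx; rewrite {1}(divn_eq i j) addnC iterD iterM (iter_fix _ fjx).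
Qed.

Lemma leq_card_bigcup (I : Type) (T : finType) (r : seq I) (P : pred I)
    (F : I -> {set T}) :
  #|\bigcup_(i <- r | P i) F i| <= \sum_(i <- r | P i) #|F i|.
Proof.
elim/big_rec2: _ => [|i A m _ IH]; first by rewrite cards0.
by rewrite (leq_trans (leq_card_setU _ _).1) // leq_add2l.
Qed.

Section Components.
Variable X : finType.
Implicit Types (e : rel X) (a b x : X) (U : {set X}).

Definition component e x : {set X} := [set y | connect e x y].

Definition add_edge e a b : rel X :=
  fun u v => [|| e u v, (u == a) && (v == b) | (u == b) && (v == a)].

Lemma eq_component e e' : e =2 e' -> component e =1 component e'.
Proof. by move=> ee' x; apply/setP => y; rewrite !inE (eq_connect ee'). Qed.

Lemma component_closed e x : symmetric e -> closed e (component e x).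
Proof.
move=> e_sym u v euv; rewrite !inE.
exact: (connect_closed (sym_connect_sym e_sym) x euv).
Qed.

Lemma component_eq e x y : symmetric e -> y \in component e x ->
  component e y = component e x.
Proof.
move=> e_sym; rewrite inE (sym_connect_sym e_sym) => yx.
by apply/setP => z; rewrite !inE (same_connect (sym_connect_sym e_sym) yx).
Qed.

Lemma component_sub e U x : closed e U -> x \in U -> component e x \subset U.
Proof.
by move=> clU xU; apply/subsetP => y; rewrite inE => /(closed_connect clU) <-.
Qed.

Lemma add_edge_sym e a b : symmetric e -> symmetric (add_edge e a b).
Proof.
move=> e_sym u v; rewrite /add_edge e_sym; congr (_ || _).
by rewrite orbC (andbC (v == a)) (andbC (v == b)).
Qed.

Lemma add_edgeC e a b : add_edge e a b =2 add_edge e b a.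
Proof. by move=> u v; rewrite /add_edge; congr (_ || _); rewrite orbC. Qed.

Lemma add_edge_closed e a b U : closed e U -> (a \in U) = (b \in U) ->
  closed (add_edge e a b) U.
Proof.
by move=> clU abU u v /or3P[/clU|/andP[/eqP-> /eqP->]|/andP[/eqP-> /eqP->]].
Qed.

End Components.

Section Transpositions.
Variable X : finType.
Implicit Types (e : rel X) (P p : {perm X}) (a b u v x : X).

Definition transposition p := [exists x, exists y, (x != y) && (p == tperm x y)].

Lemma transpositionP p :
  reflect (exists a b, a != b /\ p = tperm a b) (transposition p).
Proof.
apply: (iffP existsP) => [[a /existsP[b /andP[ab /eqP->]]]|[a [b [ab ->]]]].
  by exists a, b.
by exists a; apply/existsP; exists b; rewrite ab eqxx.
Qed.

Lemma transposition_tpermE p x : transposition p -> p x != x -> p = tperm x (p x).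
Proof.
case/transpositionP => a [b [_ ->]].
by case: (tpermP a b x) => [->|->|_ _]; rewrite ?eqxx // tpermC.
Qed.

Lemma eq_tperm a b u v : u != v ->
  (tperm u v == tperm a b) = ((u == a) && (v == b)) || ((u == b) && (v == a)).
Proof.
move=> uv; apply/eqP/idP => [tE|/orP[]/andP[/eqP-> /eqP->] //]; last exact: tpermC.
have := congr1 (fun t : {perm X} => t u) tE; rewrite tpermL.
case: tpermP => [-> ->|-> ->|_ _ vu]; rewrite ?eqxx ?orbT //.
by rewrite vu eqxx in uv.
Qed.

Lemma mem_porbit_iter P x i : iter i P x \in porbit P x.
Proof. by rewrite -permX mem_porbit. Qed.

Lemma porbit_sub_component e P x : (forall z, connect e z (P z)) ->
  porbit P x \subset component e x.
Proof.
move=> P_e; apply/subsetP => _ /porbitP[i ->]; rewrite permX inE.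
by elim: i => [|i IH]; [exact: connect0 | exact: connect_trans IH (P_e _)].
Qed.

Lemma connect_mul_tperm e P a b : (forall z, connect e z (P z)) ->
  forall z, connect (add_edge e a b) z ((P * tperm a b)%g z).
Proof.
move=> P_e z; rewrite permM; apply: (connect_trans (y := P z)).
  by apply: connect_sub (P_e z) => u v euv; rewrite connect1 // /add_edge euv.
by case: tpermP => [->|->|_ _]; rewrite ?connect0 // connect1 // /add_edge !eqxx ?orbT.
Qed.

Lemma porbit_mul_tperm_disjoint P a b x :
  a \notin porbit P x -> b \notin porbit P x -> porbit (P * tperm a b) x = porbit P x.
Proof.
move=> aPx bPx; have iterE i : iter i (P * tperm a b)%g x = iter i P x.
  elim: i => //= i ->; rewrite permM tpermD //.
    by apply: contraNneq aPx => ->; exact: (mem_porbit_iter P x i.+1).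
  by apply: contraNneq bPx => ->; exact: (mem_porbit_iter P x i.+1).
by apply/setP => y; apply/porbitP/porbitP => -[i ->]; exists i; rewrite !permX iterE.
Qed.

Section HittingTime.
Variables (P : {perm X}) (a b : X).

Lemma hit_time_subproof : exists j, (0 < j) && (iter j P a \in [:: a; b]).
Proof. by exists #|porbit P a|; rewrite lt0n card_porbit_neq0 iter_porbit mem_head. Qed.

Definition hit_time := ex_minn hit_time_subproof.

Lemma hit_timeP : [/\ 0 < hit_time, iter hit_time P a \in [:: a; b]
  & forall i, 0 < i < hit_time -> iter i P a \notin [:: a; b]].
Proof.
rewrite /hit_time; case: ex_minnP => j /andP[j0 hit_j] j_min.
split=> // i /andP[i0 lt_ij]; apply/negP => hit_i.
by have := j_min i; rewrite i0 hit_i leqNgt lt_ij => /(_ isT).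
Qed.

Lemma iter_mul_tperm_before_hit i :
  i < hit_time -> iter i (P * tperm a b)%g a = iter i P a.
Proof.
have [_ _ not_hit] := hit_timeP.
elim: i => // i IH lt_i; rewrite iterS IH ?(ltnW lt_i) // permM.
have := not_hit i.+1; rewrite lt_i => /(_ isT).
by rewrite !inE negb_or => /andP[na nb]; rewrite tpermD // eq_sym.
Qed.

Lemma hit_time_le_card : hit_time <= #|porbit (P * tperm a b) a|.
Proof.
have [_ _ not_hit] := hit_timeP; rewrite leqNgt; apply/negP => small.
have := not_hit #|porbit (P * tperm a b) a|; rewrite lt0n card_porbit_neq0 small.
by rewrite -iter_mul_tperm_before_hit // iter_porbit mem_head => /(_ isT).
Qed.

Lemma iter_hit_time_in : a != b -> b \in porbit P a -> iter hit_time P a = b.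
Proof.
move=> ab /porbitP[i bE]; have [h0 + not_hit] := hit_timeP.
rewrite !inE => /orP[/eqP ha|/eqP //]; rewrite permX (iter_modn i ha) in bE.
have [i0|i0] := posnP (i %% hit_time); first by rewrite bE i0 eqxx in ab.
have := not_hit (i %% hit_time).
by rewrite i0 ltn_mod h0 -bE !inE eqxx orbT => /(_ isT).
Qed.

Lemma iter_hit_time_notin : b \notin porbit P a -> iter hit_time P a = a.
Proof.
have [_ + _] := hit_timeP; rewrite !inE => /orP[/eqP //|/eqP hb].
by rewrite -hb mem_porbit_iter.
Qed.

Lemma porbit_sub_mul_tperm :
  b \notin porbit P a -> porbit P a \subset porbit (P * tperm a b) a.
Proof.
move=> bPa; have [h0 _ _] := hit_timeP.
apply/subsetP => _ /porbitP[i ->].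
rewrite permX (iter_modn i (iter_hit_time_notin bPa)).
by rewrite -iter_mul_tperm_before_hit ?ltn_mod // mem_porbit_iter.
Qed.

Lemma mem_porbit_mul_tperm : b \notin porbit P a -> b \in porbit (P * tperm a b) a.
Proof.
move=> bPa; have [h0 _ _] := hit_timeP.
have hitE : iter hit_time (P * tperm a b)%g a = b.
  rewrite -(prednK h0) iterS iter_mul_tperm_before_hit ?ltn_predL // permM -iterS.
  by rewrite prednK // iter_hit_time_notin // tpermL.
by rewrite -{1}hitE mem_porbit_iter.
Qed.

End HittingTime.

Lemma porbitU_sub_mul_tperm P a b : b \notin porbit P a ->
  porbit P a :|: porbit P b \subset porbit (P * tperm a b) a.
Proof.
move=> bPa; have aPb : a \notin porbit P b by rewrite porbit_sym.
have E : porbit (P * tperm b a) b = porbit (P * tperm a b) a.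
  by rewrite [tperm b a]tpermC; apply/eqP; rewrite eq_porbit_mem mem_porbit_mul_tperm.
by rewrite subUset porbit_sub_mul_tperm //= -E porbit_sub_mul_tperm.
Qed.

(* For tau = tperm x y, x is in short_splits k P tau when y = P^j x with
   0 < j < k: then P * tau splits the cycle of x, and the new cycle of x has
   at most j elements. *)
Definition short_splits k P (tau : {perm X}) : {set X} :=
  [set x | (tau x != x) && [exists j : 'I_k, (0 < j) && (iter j P x == tau x)]].

Lemma mem_short_splits k P a b j : a != b -> 0 < j < k -> iter j P a = b ->
  a \in short_splits k P (tperm a b).
Proof.
move=> ab /andP[j0 jk] hj; rewrite inE tpermL eq_sym ab /=.
by apply/existsP; exists (Ordinal jk); rewrite j0 hj eqxx.
Qed.

Lemma card_transpositions_splitting k P x :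
  #|[set tau | transposition tau & x \in short_splits k P tau]| <= k.-1.
Proof.
set A := [set tau | _ & _].
have inj : {in A &, injective (fun tau : {perm X} => tau x)}.
  move=> t1 t2; rewrite !inE => /and3P[t1T t1x _] /and3P[t2T t2x _] t12.
  by rewrite (transposition_tpermE t1T t1x) (transposition_tpermE t2T t2x) t12.
rewrite -(card_in_imset inj).
apply: leq_trans (_ : #|[set iter j.+1 P x | j : 'I_k.-1]| <= k.-1); last first.
  by rewrite (leq_trans (leq_imset_card _ _)) ?card_ord.
apply/subset_leq_card/subsetP => y /imsetP[tau + ->]; rewrite !inE.
case/and3P=> _ _ /existsP[[[|j] lt_j] /andP[//= _ /eqP <-]].
have lt_j' : j < k.-1 by rewrite -ltnS (ltn_predK lt_j).
by apply/imsetP; exists (Ordinal lt_j').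
Qed.

Lemma sum_card_short_splits k P :
  \sum_(tau | transposition tau) #|short_splits k P tau| <= #|X| * k.-1.
Proof.
under eq_bigr do rewrite -sum1_card big_mkcond /=.
rewrite exchange_big /= -sum_nat_const; apply: leq_sum => x _.
rewrite -big_mkcondr /= sum1dep_card.
exact: card_transpositions_splitting.
Qed.

End Transpositions.

Arguments transposition {X}.

Section DeficientCycles.
Variables (X : finType) (k : nat).
Implicit Types (e : rel X) (P : {perm X}) (M : {set X}) (x : X).

Definition deficient e P x := (#|porbit P x| < k) && (porbit P x != component e x).

Definition marks_deficient e P M :=
  forall x, deficient e P x -> exists2 m, m \in M & m \in porbit P x.

Lemma eq_deficient e e' P : e =2 e' -> deficient e P =1 deficient e' P.
Proof. by move=> ee' x; rewrite /deficient (eq_component ee'). Qed.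

Lemma card_large_component_small_cycle e P M : marks_deficient e P M ->
  #|[set u | k <= #|component e u|] :\: [set u | k <= #|porbit P u|]| <= k.-1 * #|M|.
Proof.
move=> PM; pose small m := if #|porbit P m| < k then porbit P m else set0.
have sub : [set u | k <= #|component e u|] :\: [set u | k <= #|porbit P u|]
    \subset \bigcup_(m in M) small m.
  apply/subsetP => u; rewrite !inE -ltnNge => /andP[lt_u ge_u].
  have [|m mM mu] := PM u.
    by rewrite /deficient lt_u; apply: contraTneq ge_u => <-; rewrite -ltnNge.
  apply/bigcupP; exists m => //; rewrite /small.
  have -> : porbit P m = porbit P u by apply/eqP; rewrite eq_porbit_mem.
  by rewrite lt_u porbit_id.
apply: leq_trans (subset_leq_card sub) (leq_trans (leq_card_bigcup _ _ _) _).
rewrite mulnC -sum_nat_const; apply: leq_sum => m _; rewrite /small.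
by case: ifP => [lt_m|_]; [rewrite -ltnS (ltn_predK lt_m) | rewrite cards0].
Qed.

Section Step.
Variables (e : rel X) (P : {perm X}) (M : {set X}).
Hypotheses (e_sym : symmetric e) (P_e : forall z, connect e z (P z)).
Hypothesis P_marked : marks_deficient e P M.

Lemma marked_or_component x : #|porbit P x| < k ->
  (exists2 m, m \in M & m \in porbit P x) \/ porbit P x = component e x.
Proof.
move=> small; have [|ne] := eqVneq (porbit P x) (component e x); first by right.
by left; apply: P_marked; rewrite /deficient small ne.
Qed.

Lemma marks_mul_tperm_touch a b x : a != b -> a \in porbit (P * tperm a b) x ->
  deficient (add_edge e a b) (P * tperm a b) x ->
  exists2 m, m \in M :|: short_splits k P (tperm a b) & m \in porbit (P * tperm a b) x.
Proof.
set P' := (P * tperm a b)%g; set e' := add_edge e a b => ab aC /andP[small bad].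
have C_e' : porbit P' x \subset component e' x.
  exact: porbit_sub_component (connect_mul_tperm a b P_e).
have Cx : porbit P' x = porbit P' a by apply/eqP; rewrite eq_porbit_mem porbit_sym.
have [bPa|bPa] := boolP (b \in porbit P a).
  exists a; last by []; rewrite inE; apply/orP; right.
  apply: mem_short_splits ab _ (iter_hit_time_in ab bPa).
  have [-> _ _] := hit_timeP P a b.
  by rewrite (leq_ltn_trans (hit_time_le_card P a b)) // -Cx.
have sub := porbitU_sub_mul_tperm bPa; rewrite -/P' -Cx in sub.
have small_sub c : porbit P c \subset porbit P' x -> #|porbit P c| < k.
  by move=> sub_c; rewrite (leq_ltn_trans (subset_leq_card sub_c)).
have [[m mM mPa]|Pa_comp] :=
  marked_or_component (small_sub a (subset_trans (subsetUl _ _) sub)).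
  by exists m; [rewrite inE mM | apply: (subsetP sub); rewrite inE mPa].
have [[m mM mPb]|Pb_comp] :=
  marked_or_component (small_sub b (subset_trans (subsetUr _ _) sub)).
  by exists m; [rewrite inE mM | apply: (subsetP sub); rewrite inE mPb orbT].
(* Both P-cycles are whole e-components; their union is closed under e', so
   the merged cycle is a whole e'-component. *)
case/negP: bad; rewrite eqEsubset C_e' /=.
have clU : closed e' (porbit P a :|: porbit P b).
  apply: add_edge_closed; last by rewrite !inE !porbit_id orbT.
  move=> u v euv; rewrite Pa_comp Pb_comp !in_setU.
  by rewrite (component_closed a e_sym euv) (component_closed b e_sym euv).
rewrite -(component_eq (add_edge_sym a b e_sym) (subsetP C_e' a aC)).
by apply: subset_trans (component_sub clU _) sub; rewrite inE porbit_id.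
Qed.

Lemma marks_mul_tperm_avoid a b x :
  a \notin porbit (P * tperm a b) x -> b \notin porbit (P * tperm a b) x ->
  deficient (add_edge e a b) (P * tperm a b) x ->
  exists2 m, m \in M & m \in porbit (P * tperm a b) x.
Proof.
set P' := (P * tperm a b)%g; set e' := add_edge e a b => aC bC /andP[small bad].
have C_e' : porbit P' x \subset component e' x.
  exact: porbit_sub_component (connect_mul_tperm a b P_e).
have CE : porbit P' x = porbit P x.
  by rewrite -(porbit_mul_tperm_disjoint aC bC) /P' -mulgA tperm2 mulg1.
rewrite CE in small bad aC bC C_e' *.
have [//|comp] := marked_or_component small; case/negP: bad.
rewrite eqEsubset C_e' comp component_sub ?inE ?connect0 //.
apply: add_edge_closed; first exact: component_closed.
by rewrite -comp (negbTE aC) (negbTE bC).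
Qed.

Lemma marks_mul_tperm a b : a != b ->
  marks_deficient (add_edge e a b) (P * tperm a b) (M :|: short_splits k P (tperm a b)).
Proof.
move=> ab x def_x.
have [aC|aC] := boolP (a \in porbit (P * tperm a b) x).
  exact: marks_mul_tperm_touch.
have [bC|bC] := boolP (b \in porbit (P * tperm a b) x).
  rewrite tpermC in bC def_x *; apply: marks_mul_tperm_touch; rewrite 1?eq_sym //.
  by rewrite -(eq_deficient _ (add_edgeC e a b)).
have [m mM mC] := marks_mul_tperm_avoid aC bC def_x.
by exists m; rewrite // inE mM.
Qed.

End Step.

End DeficientCycles.

Section Trajectory.
Variable X : finType.
Implicit Types (r : seq {perm X}) (p : {perm X}) (a b u v : X).

Definition tprod r : {perm X} := (\prod_(p <- r) p)%g.

Definition tgraph r : rel X := fun u v => (u != v) && (tperm u v \in r).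

Definition marked k r : {set X} :=
  \bigcup_(0 <= i < size r) short_splits k (tprod (take i r)) (nth 1%g r i).

Lemma tgraph_sym r : symmetric (tgraph r).
Proof. by move=> u v; rewrite /tgraph eq_sym tpermC. Qed.

Lemma tprod_rcons r p : tprod (rcons r p) = (tprod r * p)%g.
Proof. by rewrite /tprod big_rcons. Qed.

Lemma tgraph_rcons r a b : a != b ->
  tgraph (rcons r (tperm a b)) =2 add_edge (tgraph r) a b.
Proof.
move=> ab u v; rewrite /tgraph /add_edge -cats1 mem_cat mem_seq1 andb_orr.
have [->|uv] /= := eqVneq u v; last by rewrite eq_tperm.
by apply/esym/negbTE; apply: contra ab => /orP[]/andP[/eqP<- /eqP<-].
Qed.

Lemma marked_rcons k r p :
  marked k (rcons r p) = marked k r :|: short_splits k (tprod r) p.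
Proof.
rewrite /marked size_rcons big_nat_recr //= -cats1 take_size_cat // nth_cat ltnn subnn.
congr (_ :|: _); apply: eq_big_nat => i /andP[_ lt_i].
by rewrite takel_cat 1?ltnW // nth_cat lt_i.
Qed.

Lemma connect_tprod r : all transposition r ->
  forall z, connect (tgraph r) z (tprod r z).
Proof.
elim/last_ind: r => [_ z|r p IH]; first by rewrite /tprod big_nil perm1 connect0.
rewrite all_rcons => /andP[/transpositionP[a [b [ab ->]]] r_tr] z.
rewrite tprod_rcons (eq_connect (tgraph_rcons r ab)).
exact: connect_mul_tperm (IH r_tr) z.
Qed.

Lemma marks_tprod k r : all transposition r ->
  marks_deficient k (tgraph r) (tprod r) (marked k r).
Proof.
elim/last_ind: r => [_ x /andP[_ /negP[]]|r p IH].
  rewrite /tprod big_nil eqEsubset porbit_sub_component => [|z]; last first.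
    by rewrite perm1 connect0.
  apply: subset_trans (component_sub _ (set11 x)) _; last by rewrite sub1set porbit_id.
  by move=> u v; rewrite /tgraph in_nil andbF.
rewrite all_rcons => /andP[/transpositionP[a [b [ab ->]]] r_tr] x.
rewrite tprod_rcons marked_rcons (eq_deficient _ _ (tgraph_rcons r ab)).
exact: (marks_mul_tperm (tgraph_sym r) (connect_tprod r_tr) (IH r_tr) ab).
Qed.

Lemma card_large_component_small_cycle_tprod k r : all transposition r ->
  #|[set u | k <= #|component (tgraph r) u|] :\: [set u | k <= #|porbit (tprod r) u|]|
  <= k.-1 * \sum_(0 <= i < size r) #|short_splits k (tprod (take i r)) (nth 1%g r i)|.
Proof.
move=> r_tr.
apply: leq_trans (card_large_component_small_cycle (marks_tprod (k := k) r_tr)) _.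
by rewrite leq_mul2l leq_card_bigcup orbT.
Qed.

End Trajectory.

Section Resampling.
Variables (I Y : finType).
Implicit Types (A : {set Y}) (T : {ffun I -> Y}).

Definition fupd T (i : I) (y : Y) : {ffun I -> Y} :=
  [ffun j => if j == i then y else T j].

Lemma sum_ffun_forall_const A c :
  \sum_(T : {ffun I -> Y} | [forall j, T j \in A]) c = #|A| ^ #|I| * c.
Proof.
rewrite (eq_bigl (mem (ffun_on A))) => [|T]; last by apply/forallP/ffun_onP.
by rewrite sum_nat_const card_ffun_on.
Qed.

Lemma sum_resample A i (G : {ffun I -> Y} -> nat) :
  (\sum_(T : {ffun I -> Y} | [forall j, T j \in A]) G T) * #|A|
  = \sum_(T : {ffun I -> Y} | [forall j, T j \in A]) \sum_(y in A) G (fupd T i y).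
Proof.
pose phi (Ty : {ffun I -> Y} * Y) := (fupd Ty.1 i Ty.2, Ty.1 i).
have phiK : involutive phi.
  move=> [T y]; rewrite /phi /= ffunE eqxx; congr pair.
  by apply/ffunP => j; rewrite !ffunE; case: eqP => // ->.
have phi_dom T y : [forall j, fupd T i y j \in A] && (T i \in A)
    = [forall j, T j \in A] && (y \in A).
  apply/andP/andP => -[/forallP DT Ay]; split.
  - by apply/forallP => j; have := DT j; rewrite ffunE; case: eqP => [->|].
  - by have := DT i; rewrite ffunE eqxx.
  - by apply/forallP => j; rewrite ffunE; case: eqP => _; [exact: Ay | exact: DT].
  - exact: DT.
rewrite big_distrl /=; under eq_bigr do rewrite -sum1_card big_distrr /=.
rewrite !pair_big_dep (reindex_inj (inv_inj phiK)) /=.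
by apply: eq_big => [[T y]|[T y] _]; [exact: phi_dom | rewrite muln1].
Qed.

End Resampling.

Section RandomTranspositions.
Variables n s : nat.
Implicit Types (T : {ffun 'I_s -> {perm 'I_n}}) (k : nat).

Lemma card_transpositions_ge : n * n.-1 <= 2 * #|transpositions n|.
Proof.
pose f (xj : 'I_n * 'I_n.-1) := (tperm xj.1 (lift xj.1 xj.2), xj.1 < lift xj.1 xj.2).
have f_inj : injective f.
  move=> [x j] [x' j']; rewrite /f /=; set y := lift x j; set y' := lift x' j'.
  case=> /eqP + ltE; rewrite eq_tperm ?neq_lift // => /orP[]/andP[/eqP xE /eqP yE].
    by move: yE; rewrite /y /y' -xE => /lift_inj ->.
  change ((x < y) = (x' < y')) in ltE.
  by move: ltE (neq_lift x j); rewrite -/y -xE -yE -val_eqE; case: ltngtP.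
have -> : n * n.-1 = #|f @: [set: 'I_n * 'I_n.-1]|.
  by rewrite card_imset // cardsT card_prod !card_ord.
rewrite mulnC -[2]card_bool -cardsT -cardsX subset_leq_card //.
apply/subsetP => _ /imsetP[[x j] _ ->]; rewrite !inE andbT.
by apply/existsP; exists x; apply/existsP; exists (lift x j); rewrite neq_lift eqxx.
Qed.

Lemma transpositions_gt0 : 1 < n -> 0 < #|transpositions n|.
Proof. by have := card_transpositions_ge; nia. Qed.

Lemma pi_sE T : pi_s T = tprod (codom T).
Proof. by rewrite /pi_s /tprod codomE big_map enumT [index_enum _]unlock. Qed.

Lemma GedgeE T : Gedge T =2 tgraph (codom T).
Proof.
move=> u v; congr (_ && _).
by apply/existsP/codomP => [[i /eqP <-]|[i ->]]; exists i.
Qed.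

Lemma GcompE T : Gcomp T =1 component (tgraph (codom T)).
Proof. exact: eq_component (GedgeE T). Qed.

Lemma nth_codom_ord T (i : 'I_s) : nth 1%g (codom T) i = T i.
Proof. by rewrite codomE (nth_map i) ?size_enum_ord // nth_ord_enum. Qed.

Lemma card_VG_diff_VX k T : (forall i, T i \in transpositions n) ->
  #|VG k T :\: VX k T|
  <= k.-1 * \sum_(i < s) #|short_splits k (tprod (take i (codom T))) (T i)|.
Proof.
move=> T_tr; have codom_tr : all transposition (codom T).
  by apply/allP => _ /codomP[i ->]; have := T_tr i; rewrite inE.
have -> : VG k T :\: VX k T = [set u | k <= #|component (tgraph (codom T)) u|]
    :\: [set u | k <= #|porbit (tprod (codom T)) u|].
  by apply/setP => u; rewrite !inE GcompE pi_sE.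
apply: leq_trans (card_large_component_small_cycle_tprod k codom_tr) _.
rewrite size_codom card_ord big_mkord leq_mul2l; apply/orP; right.
by apply/eq_leq/eq_bigr => i _; rewrite nth_codom_ord.
Qed.

Lemma take_codom_fupd T (i : 'I_s) p : take i (codom (fupd T i p)) = take i (codom T).
Proof.
rewrite !codomE -!(map_take _ _ (enum 'I_s)); apply/eq_in_map => j /index_ltn.
by rewrite index_enum_ord ffunE; case: eqP => // ->; rewrite ltnn.
Qed.

Lemma sum_card_short_splits_prefix k (i : 'I_s) :
  (\sum_(T : {ffun 'I_s -> {perm 'I_n}} | [forall j, T j \in transpositions n])
     #|short_splits k (tprod (take i (codom T))) (T i)|) * #|transpositions n|
  <= #|transpositions n| ^ s * (n * k.-1).
Proof.
rewrite (sum_resample _ i) -[s in _ ^ s]card_ord -sum_ffun_forall_const.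
apply: leq_sum => T _; rewrite -[n in n * _]card_ord.
under eq_bigr do rewrite take_codom_fupd ffunE eqxx.
by rewrite (eq_bigl transposition) ?sum_card_short_splits // => p; rewrite inE.
Qed.

Lemma sum_card_VG_diff_VX k :
  (\sum_(T : {ffun 'I_s -> {perm 'I_n}} | [forall i, T i \in transpositions n])
     #|VG k T :\: VX k T|) * n.-1
  <= 2 * s * k.-1 ^ 2 * #|transpositions n| ^ s.
Proof.
set Tr := transpositions n; set Sd := \sum_(T | _) _.
have [n_le1|n_gt1] := leqP n 1; first by rewrite (_ : n.-1 = 0) ?muln0 //; lia.
have SdTr : Sd * #|Tr| <= k.-1 * (s * (#|Tr| ^ s * (n * k.-1))).
  have Sd_le : Sd <= k.-1 * \sum_(i < s)
      \sum_(T : {ffun 'I_s -> {perm 'I_n}} | [forall j, T j \in Tr])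
        #|short_splits k (tprod (take i (codom T))) (T i)|.
    rewrite exchange_big big_distrr /=; apply: leq_sum => T /forallP T_tr.
    exact: card_VG_diff_VX.
  apply: leq_trans (leq_mul Sd_le (leqnn _)) _; rewrite -mulnA leq_mul2l big_distrl /=.
  apply/orP; right; rewrite -[s in s * _]card_ord -sum_nat_const.
  by apply: leq_sum => i _; exact: sum_card_short_splits_prefix.
rewrite -(leq_pmul2r (transpositions_gt0 n_gt1)) mulnAC.
apply: leq_trans (leq_mul SdTr (leqnn n.-1)) _.
have := leq_mul (leqnn (s * k.-1 ^ 2 * #|Tr| ^ s)) card_transpositions_ge; lia.
Qed.

End RandomTranspositions.

Theorem lemma2p2 (n k s : nat) (hn : (2 <= n)%N) :
  (expected_diff n s k <= 4%:R * s%:R * (k ^ 2)%:R / (n - 1)%:R)%R.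
Proof.
have Tr_gt0 := transpositions_gt0 hn.
rewrite /expected_diff -natr_sum ler_pdivrMr ?ltr0n ?expn_gt0 ?Tr_gt0 //.
rewrite mulrAC ler_pdivlMr ?ltr0n ?subn_gt0 // -!natrM ler_nat subn1.
apply: leq_trans (sum_card_VG_diff_VX n s k) _.
have := leq_pred k; nia.
Qed.
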